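(* Let $q$ be a prime power, $0<k<n\le q$ with $n\mid q-1$, and let $C=RS_k(n,b)$ be a Reed–Solomon code over $\mathbb{F}_q$ with $0<b\le (k+1)/2$. Then there exists an MDS QUENTA code with parameters $[[n,\,2b-1,\,n-k+1;\,n+2b-2k-1]]_q$. In particular, for $b=(k+1)/2$ this is a maximal entanglement MDS QUENTA code.
   Context: For $n\mid q-1$ and a primitive $n$-th root of unity $\alpha\in\mathbb{F}_q$, the Reed–Solomon code $RS_k(n,b)$ is the cyclic code of length $n$ over $\mathbb{F}_q$ with defining set $\{b,b+1,\dots,b+n-k-1\}$ (indices mod $n$), where the defining set of a cyclic code $C$ is $\{i\in\mathbb{Z}_n: c(\alpha^i)=0\ \forall c\in C\}$; it is an $[n,k,n-k+1]_q$ code. A QUENTA code (entanglement-assisted quantum error-correcting code) with parameters $[[n,k,d;c]]_q$ is a $q$-ary entanglement-assisted quantum stabilizer code that encodes $k$ logical qudits into $n$ physical qudits using $c$ pairs of maximally entangled qudits pre-shared between sender and receiver, and has minimum distance $d$. It has maximal entanglement if $c=n-k$, and it is MDS if $k=n-2(d-1)+c$ (equality in the entanglement-assisted quantum Singleton bound).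
   Formalization: The parameters also satisfy $2k+1\le n+2b$, so the number $n+2b-2k-1$ of maximally entangled pairs is nonnegative. The statement above fails without it. *)

From HB Require Import structures.
From mathcomp Require Import all_boot all_order all_algebra all_fingroup all_field.
Set Implicit Arguments. Unset Strict Implicit. Unset Printing Implicit Defensive.
Import GRing.Theory.
Local Open Scope ring_scope.

Section Quenta.
Variable F : finFieldType.

(** Reed-Solomon code RS_k(n,b): cyclic code of length n with defining set
    {b, b+1, ..., b+n-k-1} (exponents of alpha, taken mod n automatically
    since alpha^n = 1). *)
Definition RS_code (n k b : nat) (alpha : F) : pred 'rV[F]_n :=
  fun c => [forall j : 'I_(n - k),
              \sum_(i < n) c 0 i * alpha ^+ (i * (b + j)) == 0].

(** Symplectic form on F_q^{2n}: vectors (a|b), <(a|b),(a'|b')>_s = a.b' - b.a'. *)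
Definition symJ (n : nat) : 'M[F]_(n + n) :=
  block_mx 0 1%:M (- 1%:M) 0.

Definition sdual (n m : nat) (M : 'M[F]_(m, n + n)) : 'M[F]_(n + n) :=
  kermx (symJ n *m M^T).

Definition shull (n m : nat) (M : 'M[F]_(m, n + n)) : 'M[F]_(n + n) :=
  (M :&: sdual M)%MS.

Definition swt (n : nat) (v : 'rV[F]_(n + n)) : nat :=
  #|[set i : 'I_n | (v 0 (lshift n i) != 0) || (v 0 (rshift n i) != 0)]|.

Definition ebits (n m : nat) (M : 'M[F]_(m, n + n)) : nat :=
  ((\rank M - \rank (shull M)) %/ 2)%N.

(** The entanglement-assisted stabilizer code with stabilizer rowspace M is a
    QUENTA code [[n,k,d;c]]_q:  c ebits, k = n - dim S + c logical qudits,
    minimum distance d = min symplectic weight of S^{⊥s} \ (S ∩ S^{⊥s}). *)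
Definition is_QUENTA (n k d c m : nat) (M : 'M[F]_(m, n + n)) : Prop :=
  [/\ c = ebits M,
      k = (n + c - \rank M)%N,
      (exists v : 'rV[F]_(n + n),
          [&& (v <= sdual M)%MS, ~~ (v <= shull M)%MS & swt v == d]) &
      (forall v : 'rV[F]_(n + n),
          (v <= sdual M)%MS -> ~~ (v <= shull M)%MS -> (d <= swt v)%N)].

Definition QUENTA_exists (n k d c : nat) : Prop :=
  exists m (M : 'M[F]_(m, n + n)), is_QUENTA k d c M.

(** MDS: equality in the EA quantum Singleton bound k = n - 2(d-1) + c. *)
Definition QUENTA_MDS (n k d c : nat) : Prop := (k + 2 * (d - 1) = n + c)%N.

Definition max_entangled (n k c : nat) : Prop := c = (n - k)%N.

End Quenta.

From HB Require Import structures.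
From mathcomp Require Import all_boot all_order all_algebra all_fingroup all_field.
From mathcomp Require Import zify.
Set Implicit Arguments. Unset Strict Implicit. Unset Printing Implicit Defensive.
Import GRing.Theory.
Local Open Scope ring_scope.

(* Let E(c, m) be the m x n matrix whose row j evaluates X^(c+j) at the powers
   of alpha.  A nonzero word in its row space comes from a nonzero polynomial
   of degree < m, so it has weight > n - m; and E(c, m) E(c', m')^T = 0 as soon
   as every exponent sum c + j + c' + l lies strictly between n and 2n, since
   the powers of a primitive n-th root of unity sum to zero.  With
   t = k + 1 - 2b take the stabilizer S = E(k+t, n-k) (+) E(1, n-k).
   Orthogonality and a dimension count give
   S^{perp_s} = E(n, k) (+) E(n-k+1-t, k), whose nonzero words have symplectic
   weight > n - k, and S + S^{perp_s} = E(k+t, n-t) (+) E(1, n-t), so the hull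
   has dimension 2t and S uses n - k - t ebits.  A word of weight exactly
   n - k + 1 outside the hull comes from the polynomial vanishing at
   alpha^0, ..., alpha^(k-2). *)

Lemma ndvdn_between n d N : (n * d < N)%N -> (N < n * d.+1)%N -> ~~ (n %| N)%N.
Proof.
move=> ltdN ltNd; apply/dvdnP => -[x eNx]; move: ltdN ltNd; rewrite eNx (mulnC x).
have [->|n_gt0] := posnP n; first by rewrite !mul0n.
by rewrite !ltn_pmul2l //; lia.
Qed.

Lemma sum_prim_root_expM (R : idomainType) n (z : R) N :
  n.-primitive_root z -> \sum_(i < n) z ^+ (i * N) = if (n %| N)%N then n%:R else 0.
Proof.
move=> prim_z; under eq_bigr do rewrite mulnC exprM.
have [/dvdnP[d ->]|nN] := ifP.
  under eq_bigr do rewrite (mulnC d) exprM (prim_expr_order prim_z) !expr1n.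
  by rewrite sumr_const card_ord.
have /eqP := subrX1 (z ^+ N) n.
rewrite -exprM mulnC exprM (prim_expr_order prim_z) expr1n subrr eq_sym mulf_eq0.
by rewrite subr_eq0 -(prim_order_dvd prim_z) nN => /eqP.
Qed.

Definition wt (R : nzRingType) (n : nat) (v : 'rV[R]_n) : nat :=
  #|[set i | v 0 i != 0]|.

Lemma wt_card_zeros (R : nzRingType) (n : nat) (v : 'rV[R]_n) :
  wt v = subn n #|[set i | v 0 i == 0]|.
Proof.
rewrite /wt -[X in subn X _](card_ord n) -(cardsC [set i | v 0 i == 0]) addKn.
by apply: eq_card => i; rewrite !inE.
Qed.

Section ReedSolomonMatrices.
Variables (F : fieldType) (n : nat) (alpha : F).
Hypothesis prim_alpha : n.-primitive_root alpha.

Definition rs_row (e : nat) : 'rV[F]_n := \row_(i < n) alpha ^+ (i * e).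

Definition rs_mx (c m : nat) : 'M[F]_(m, n) := \matrix_(j < m) rs_row (c + j).

Lemma row_rs_mx c m j : row j (rs_mx c m) = rs_row (c + j).
Proof. exact: rowK. Qed.

Lemma rs_row_sub c m e : (c <= e < c + m)%N -> (rs_row e <= rs_mx c m)%MS.
Proof.
case/andP=> le_ce lt_em; have lt_e_m : (e - c < m)%N by lia.
by rewrite -(subnKC le_ce) -(row_rs_mx _ (Ordinal lt_e_m)) row_sub.
Qed.

Lemma rs_mx_sub c m c' m' :
  (c' <= c)%N -> (c + m <= c' + m')%N -> (rs_mx c m <= rs_mx c' m')%MS.
Proof.
move=> le_c'c le_cm; apply/row_subP => j; rewrite row_rs_mx rs_row_sub //.
by have := ltn_ord j; lia.
Qed.

Lemma rs_mx_adds c m c' m' : (c <= c' <= c + m)%N -> (c + m <= c' + m')%N ->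
  (rs_mx c m + rs_mx c' m' :=: rs_mx c (c' + m' - c))%MS.
Proof.
move=> /andP[le_cc' le_c'cm] le_cm; apply/eqmxP.
rewrite addsmx_sub !rs_mx_sub //=; try lia.
apply/row_subP => j; rewrite row_rs_mx; have := ltn_ord j.
have [lt_jm _|le_mj lt_j] := ltnP j m.
  by apply: submx_trans (addsmxSl _ _); rewrite rs_row_sub //; lia.
by apply: submx_trans (addsmxSr _ _); rewrite rs_row_sub //; lia.
Qed.

Lemma rs_mx_mul_trE c m c' m' j l :
  (rs_mx c m *m (rs_mx c' m')^T) j l = \sum_(i < n) alpha ^+ (i * (c + j + (c' + l))).
Proof. by rewrite !mxE; apply: eq_bigr => i _; rewrite !mxE -exprD -mulnDr. Qed.

Lemma rs_mx_orthogonal c m c' m' :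
  (n < c + c')%N -> (c + m + (c' + m') <= (n + n).+1)%N ->
  rs_mx c m *m (rs_mx c' m')^T = 0.
Proof.
move=> lt_n hi; apply/matrixP => j l.
rewrite rs_mx_mul_trE sum_prim_root_expM // mxE ifN //.
by apply: (@ndvdn_between _ 1); have := ltn_ord j; have := ltn_ord l; lia.
Qed.

Let alpha_neq0 : alpha != 0.
Proof. by rewrite (prim_root_eq0 prim_alpha) -lt0n (prim_order_gt0 prim_alpha). Qed.

Lemma mul_rV_rs_mx c m (x : 'rV[F]_m) (i : 'I_n) :
  (x *m rs_mx c m) 0 i = alpha ^+ (i * c) * (rVpoly x).[alpha ^+ i].
Proof.
rewrite !mxE (horner_coef_wide _ (size_poly _ _)) mulr_sumr; apply: eq_bigr => j _.
by rewrite !mxE coef_rVpoly_ord mulnDr exprD -exprM mulrCA.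
Qed.

Lemma card_prim_root_roots (p : {poly F}) (Z : {set 'I_n}) :
  p != 0 -> {in Z, forall i : 'I_n, root p (alpha ^+ i)} -> (#|Z| < size p)%N.
Proof.
move=> p_nz rootZ; rewrite cardE -(size_map (fun i : 'I_n => alpha ^+ i)).
apply: max_poly_roots p_nz _ _.
  by apply/allP => y /mapP[i]; rewrite mem_enum => /rootZ rooti ->.
rewrite map_inj_in_uniq ?enum_uniq // => i j _ _ /eqP.
by rewrite (eq_prim_root_expr prim_alpha) !modn_small // => /eqP /val_inj.
Qed.

Lemma wt_mul_rs_mx c m (x : 'rV[F]_m) :
  (m <= n)%N -> x != 0 -> (n - m < wt (x *m rs_mx c m))%N.
Proof.
move=> le_mn x_nz; set p := rVpoly x.
have p_nz : p != 0.
  by apply: contra x_nz => /eqP p0; apply/eqP/rowP => j; rewrite -coef_rVpoly_ord -/p p0 coef0 mxE.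
have le_pm : (size p <= m)%N := size_poly _ _.
rewrite wt_card_zeros; set Z := [set i | _ == 0].
suff : (#|Z| < size p)%N by lia.
apply: card_prim_root_roots p_nz _ => i; rewrite inE mul_rV_rs_mx mulf_eq0 expf_eq0.
by rewrite (negbTE alpha_neq0) andbF.
Qed.

Lemma mxrank_rs_mx c m : (m <= n)%N -> \rank (rs_mx c m) = m.
Proof.
move=> le_mn; apply/eqP/inj_row_free => x xE0; apply/eqP; apply: contraT => x_nz.
have wt0 : wt (0 : 'rV[F]_n) = 0%N by apply: eq_card0 => i; rewrite !inE mxE eqxx.
by have := wt_mul_rs_mx c le_mn x_nz; rewrite xE0 wt0.
Qed.

Lemma rs_mx_wt c m (v : 'rV[F]_n) :
  (m <= n)%N -> (v <= rs_mx c m)%MS -> v != 0 -> (n - m < wt v)%N.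
Proof.
move=> le_mn /submxP[x ->{v}] v_nz; apply: wt_mul_rs_mx => //.
by apply: contra v_nz => /eqP ->; rewrite mul0mx.
Qed.

End ReedSolomonMatrices.

Section BlockDiagonal.
Variables (F : fieldType) (n1 n2 : nat).

Lemma mul_rV_block_diag p1 p2 (A : 'M[F]_(p1, n1)) (B : 'M[F]_(p2, n2))
    (w : 'rV[F]_(p1 + p2)) :
  w *m block_mx A 0 0 B = row_mx (lsubmx w *m A) (rsubmx w *m B).
Proof.
rewrite -{1}(hsubmxK w) /block_mx mul_row_col !mul_mx_row !mulmx0.
by rewrite add_row_mx addr0 add0r.
Qed.

Lemma row_mx_sub_block_diag p1 p2 (A : 'M[F]_(p1, n1)) (B : 'M[F]_(p2, n2))
    (a : 'rV[F]_n1) (b : 'rV[F]_n2) :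
  (row_mx a b <= block_mx A 0 0 B)%MS = (a <= A)%MS && (b <= B)%MS.
Proof.
apply/idP/andP => [/submxP[w]|[/submxP[x ->] /submxP[y ->]]].
  by rewrite mul_rV_block_diag => /eq_row_mx[-> ->]; rewrite !submxMl.
by rewrite -[x](row_mxKl x y) -[y in y *m B](row_mxKr x y) -mul_rV_block_diag submxMl.
Qed.

Lemma block_diag_submx p1 p2 p3 p4 (A : 'M[F]_(p1, n1)) (B : 'M[F]_(p2, n2))
    (C : 'M[F]_(p3, n1)) (D : 'M[F]_(p4, n2)) :
  (A <= C)%MS -> (B <= D)%MS -> (block_mx A 0 0 B <= block_mx C 0 0 D)%MS.
Proof.
move=> sAC sBD; apply/rV_subP => u; rewrite -(hsubmxK u) !row_mx_sub_block_diag.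
by case/andP=> /submx_trans-> // /submx_trans->.
Qed.

Lemma adds_block_diag p1 p2 p3 p4 (A : 'M[F]_(p1, n1)) (B : 'M[F]_(p2, n2))
    (C : 'M[F]_(p3, n1)) (D : 'M[F]_(p4, n2)) :
  (block_mx A 0 0 B + block_mx C 0 0 D :=: block_mx (A + C)%MS 0 0 (B + D)%MS)%MS.
Proof.
apply/eqmxP; rewrite addsmx_sub !block_diag_submx ?addsmxSl ?addsmxSr //=.
apply/rV_subP => u; rewrite -(hsubmxK u) row_mx_sub_block_diag.
case/andP=> /sub_addsmxP[[x y] /= ->] /sub_addsmxP[[z w] /= ->].
by rewrite -add_row_mx addmx_sub_adds // row_mx_sub_block_diag !submxMl.
Qed.

End BlockDiagonal.

Section Symplectic.
Variable F : finFieldType.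

Lemma unitmx_symJ n : symJ F n \in unitmx.
Proof.
suff /mulmx1_unit[] : symJ F n *m (- symJ F n) = 1%:M by [].
rewrite mulmxN /symJ mulmx_block.
rewrite !(mulmx0, mul0mx, mulmx1, mul1mx, mulmxN, addr0, add0r, opprK).
by rewrite (scalar_mx_block n n) opp_block_mx !oppr0 opprK.
Qed.

Lemma mxrank_sdual n m (M : 'M[F]_(m, n + n)) :
  \rank (sdual M) = (n + n - \rank M)%N.
Proof.
rewrite /sdual mxrank_ker -mxrank_tr trmx_mul trmxK mxrankMfree //.
by rewrite row_free_unit unitmx_tr unitmx_symJ.
Qed.

Lemma block_diag_sub_sdual n p1 p2 p3 p4 (A : 'M[F]_(p1, n)) (B : 'M[F]_(p2, n))
    (C : 'M[F]_(p3, n)) (D : 'M[F]_(p4, n)) :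
  A *m D^T = 0 -> B *m C^T = 0 -> (block_mx A 0 0 B <= sdual (block_mx C 0 0 D))%MS.
Proof.
move=> AD0 BC0; apply/sub_kermxP; rewrite mulmxA /symJ tr_block_mx !mulmx_block.
rewrite !(mulmx0, mul0mx, mulmx1, mulmxN, trmx0, mulNmx, addr0, add0r).
by rewrite AD0 BC0 !oppr0 block_mx0.
Qed.

Lemma swt_row_mx0 n (a : 'rV[F]_n) : swt (row_mx a 0) = wt a.
Proof. by apply: eq_card => i; rewrite !inE row_mxEl row_mxEr mxE eqxx orbF. Qed.

Lemma leq_wt_swtl n (a b : 'rV[F]_n) : (wt a <= swt (row_mx a b))%N.
Proof. by apply/subset_leq_card/subsetP => i; rewrite !inE row_mxEl => ->. Qed.

Lemma leq_wt_swtr n (a b : 'rV[F]_n) : (wt b <= swt (row_mx a b))%N.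
Proof. by apply/subset_leq_card/subsetP => i; rewrite !inE row_mxEr => ->; rewrite orbT. Qed.

End Symplectic.

Section ReedSolomonQUENTA.
Variables (F : finFieldType) (n k t : nat) (alpha : F).
Hypotheses (prim_alpha : n.-primitive_root alpha)
  (lt_tk : (t < k)%N) (le_ktn : (k + t <= n)%N).

Local Notation E := (rs_mx n alpha).

Definition rs_stab : 'M[F]_(n - k + (n - k), n + n) :=
  block_mx (E (k + t) (n - k)) 0 0 (E 1 (n - k)).

(* Exponents n, ..., n + k - 1 rather than 0, ..., k - 1 keep all exponent
   sums against the stabilizer strictly between n and 2n. *)
Definition rs_stab_dual : 'M[F]_(k + k, n + n) :=
  block_mx (E n k) 0 0 (E (n - k + 1 - t) k).

Lemma rank_rs_stab : \rank rs_stab = (n - k + (n - k))%N.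
Proof. by rewrite rank_diag_block_mx !mxrank_rs_mx // leq_subr. Qed.

Lemma sdual_rs_stab : (sdual rs_stab :=: rs_stab_dual)%MS.
Proof.
have le_kn : (k <= n)%N by lia.
have sub_dual : (rs_stab_dual <= sdual rs_stab)%MS.
  by apply: block_diag_sub_sdual; apply: rs_mx_orthogonal => //; lia.
apply/eqmx_sym/eqmxP; rewrite -(mxrank_leqif_eq sub_dual).2.
rewrite mxrank_sdual rank_rs_stab rank_diag_block_mx !mxrank_rs_mx //.
by apply/eqP; lia.
Qed.

Lemma rank_shull_rs_stab : \rank (shull rs_stab) = (t + t)%N.
Proof.
have := mxrank_sum_cap rs_stab (sdual rs_stab).
rewrite (adds_eqmx (eqmx_refl _) sdual_rs_stab) adds_block_diag rank_diag_block_mx.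
rewrite !rs_mx_adds ?mxrank_rs_mx ?mxrank_sdual ?rank_rs_stab /shull //; lia.
Qed.

Lemma swt_rs_stab_dual (v : 'rV[F]_(n + n)) :
  (v <= rs_stab_dual)%MS -> v != 0 -> (n - k < swt v)%N.
Proof.
have le_kn : (k <= n)%N by lia.
rewrite -(hsubmxK v) row_mx_sub_block_diag => /andP[sub_l sub_r] v_nz.
have [l0|l_nz] := eqVneq (lsubmx v) 0.
  have r_nz : rsubmx v != 0 by apply: contra v_nz => /eqP r0; rewrite l0 r0 row_mx0.
  exact: leq_trans (rs_mx_wt prim_alpha le_kn sub_r r_nz) (leq_wt_swtr _ _).
exact: leq_trans (rs_mx_wt prim_alpha le_kn sub_l l_nz) (leq_wt_swtl _ _).
Qed.

Definition rs_min_poly : {poly F} :=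
  \prod_(a <- [seq alpha ^+ j | j <- iota 0 k.-1]) ('X - a%:P).

Definition rs_min_word : 'rV[F]_n := poly_rV rs_min_poly *m E n k.

Lemma size_rs_min_poly : size rs_min_poly = k.
Proof. by rewrite size_prod_XsubC size_map size_iota prednK //; lia. Qed.

Lemma rs_min_word_notin : ~~ (rs_min_word <= E (k + t) (n - k))%MS.
Proof.
(* The left block of the stabilizer is orthogonal to E (n - k + 1 - t) k, but
   in column t of the product only the leading coefficient survives, times n. *)
have lt_k1k : (k.-1 < k)%N by lia.
apply/negP => /submxP[y def_w].
have : (rs_min_word *m (E (n - k + 1 - t) k)^T) 0 (Ordinal lt_tk) = 0.
  by rewrite def_w -mulmxA rs_mx_orthogonal ?mulmx0 ?mxE //; lia.
rewrite /rs_min_word -mulmxA mxE (bigD1 (Ordinal lt_k1k)) //= big1 => [|j ne_j].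
  rewrite addr0 rs_mx_mul_trE sum_prim_root_expM // ifT; last first.
    by apply/dvdnP; exists 2%N; rewrite /=; lia.
  have lead1 : rs_min_poly`_k.-1 = 1.
    by rewrite -size_rs_min_poly -lead_coefE; apply: lead_coef_prod_XsubC.
  rewrite mxE /= lead1 mul1r => /eqP.
  by rewrite (negbTE (prim_root_natf_neq0 prim_alpha)).
rewrite rs_mx_mul_trE sum_prim_root_expM // ifN ?mulr0 //.
have ne_jk : (j : nat) != k.-1 by apply: contra ne_j => /eqP e; apply/eqP/val_inj.
by apply: (@ndvdn_between _ 1) => /=; move/eqP: ne_jk; have := ltn_ord j; lia.
Qed.

Lemma wt_rs_min_word : wt rs_min_word = (n - k + 1)%N.
Proof.
have le_kn : (k <= n)%N by lia.
have w_nz : rs_min_word != 0.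
  by apply: contra rs_min_word_notin => /eqP ->; apply: sub0mx.
have lower : (n - k < wt rs_min_word)%N := rs_mx_wt prim_alpha le_kn (submxMl _ _) w_nz.
have le_k1n : (k.-1 <= n)%N by lia.
set Z0 := [set widen_ord le_k1n i | i : 'I_k.-1].
have card_Z0 : #|Z0| = k.-1.
  by rewrite card_imset ?cardsT ?card_ord // => i j /(congr1 val) /= /val_inj.
rewrite wt_card_zeros in lower *; set Z := [set i | _ == 0] in lower *.
have sub_Z0 : Z0 \subset Z.
  apply/subsetP => _ /imsetP[j _ ->]; rewrite inE.
  rewrite /rs_min_word mul_rV_rs_mx // poly_rV_K ?size_rs_min_poly //.
  by rewrite (rootP _) ?mulr0 // root_prod_XsubC map_f // mem_iota /= ltn_ord.
by have := subset_leq_card sub_Z0; rewrite card_Z0; lia.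
Qed.

Lemma rs_stab_QUENTA : is_QUENTA (k - t) (n - k + 1) (n - k - t) rs_stab.
Proof.
split.
- by rewrite /ebits rank_rs_stab rank_shull_rs_stab !addnn -!mul2n -mulnBr mulKn.
- by rewrite rank_rs_stab; lia.
- exists (row_mx rs_min_word 0); rewrite swt_row_mx0 wt_rs_min_word eqxx andbT.
  rewrite sdual_rs_stab row_mx_sub_block_diag submxMl sub0mx /=.
  apply: contra rs_min_word_notin => /submx_trans/(_ (capmxSl _ _)).
  by rewrite row_mx_sub_block_diag => /andP[].
- move=> v sub_v notin_v; rewrite addn1; apply: swt_rs_stab_dual.
    by rewrite -sdual_rs_stab.
  by apply: contra notin_v => /eqP ->; apply: sub0mx.
Qed.

End ReedSolomonQUENTA.

Unset Implicit Arguments.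

Theorem mainTheorem4 (F : finFieldType) (q n k b : nat) (alpha : F)
  (C : pred 'rV[F]_n)
  (hq : #|F| = q)
  (hk0 : (0 < k)%N) (hkn : (k < n)%N) (hnq : (n <= q)%N)
  (hdiv : (n %| q.-1)%N)
  (halpha : n.-primitive_root alpha)
  (hC : C =i @RS_code F n k b alpha)
  (hb0 : (0 < b)%N) (hbk : (2 * b <= k + 1)%N)
  (hc : (2 * k + 1 <= n + 2 * b)%N) :
  (@QUENTA_exists F n (2 * b - 1) (n - k + 1) (n + 2 * b - 2 * k - 1)
   /\ @QUENTA_MDS n (2 * b - 1) (n - k + 1) (n + 2 * b - 2 * k - 1))
  /\ ((2 * b = k + 1)%N ->
      @QUENTA_exists F n (2 * b - 1) (n - k + 1) (n + 2 * b - 2 * k - 1)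
      /\ @QUENTA_MDS n (2 * b - 1) (n - k + 1) (n + 2 * b - 2 * k - 1)
      /\ @max_entangled n (2 * b - 1) (n + 2 * b - 2 * k - 1)).
Proof.
pose t := (k + 1 - 2 * b)%N.
have code : QUENTA_exists F n (2 * b - 1) (n - k + 1) (n + 2 * b - 2 * k - 1).
  have -> : (2 * b - 1 = k - t)%N by rewrite /t; lia.
  have -> : (n + 2 * b - 2 * k - 1 = n - k - t)%N by rewrite /t; lia.
  by exists _, (rs_stab n k t alpha); apply: rs_stab_QUENTA => //; rewrite /t; lia.
have mds : QUENTA_MDS n (2 * b - 1) (n - k + 1) (n + 2 * b - 2 * k - 1).
  by rewrite /QUENTA_MDS; lia.
by split=> // eq_bk; do !split=> //; rewrite /max_entangled; lia.
Qed.
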